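(* Let $L$ be an $R_0$-algebra. Given any chain of fated filters $F_0\subset F_1\subset\cdots\subset F_n=L$ of $L$, there exists an $(\in,\in\vee q)$-fuzzy fated filter $\mu$ of $L$ whose level fated filters $U(\mu;t)=\{x\in L\mid\mu(x)\ge t\}$, $t\in(0,0.5]$, are precisely the members $F_0,F_1,\dots,F_n$ of the chain, and such that $U(\mu;0.5)=F_0$.
   Context: An $R_0$-algebra is a bounded distributive lattice $(L,\wedge,\vee,0,1)$ with an order-reversing involution $\neg$ and a binary operation $\to$ such that for all $x,y,z\in L$: $x\to y=\neg y\to\neg x$; $1\to x=x$; $(y\to z)\wedge((x\to y)\to(x\to z))=y\to z$; $x\to(y\to z)=y\to(x\to z)$; $x\to(y\vee z)=(x\to y)\vee(x\to z)$; $(x\to y)\vee((x\to y)\to(\neg x\vee y))=1$. A fated filter of $L$ is a nonempty subset $A\subseteq L$ with $1\in A$ such that for all $x,y\in L$ and $a\in A$, $a\to((x\to y)\to x)\in A$ implies $x\in A$. For $x\in L$, $t\in(0,1]$ and a fuzzy subset $\mu:L\to[0,1]$: $x_t\in\mu$ iff $\mu(x)\ge t$; $x_t\,q\,\mu$ iff $\mu(x)+t>1$; $x_t\in\vee q\,\mu$ iff $x_t\in\mu$ or $x_t\,q\,\mu$. $\mu$ is an $(\in,\in\vee q)$-fuzzy fated filter of $L$ if (1) for all $x\in L$, $t\in(0,1]$: $x_t\in\mu\Rightarrow 1_t\in\vee q\,\mu$; and (2) for all $x,a,y\in L$, $t,s\in(0,1]$: if $(a\to((x\to y)\to x))_t\in\mu$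 and $a_s\in\mu$ then $x_{\min\{t,s\}}\in\vee q\,\mu$. *)

From Stdlib Require Export Reals.
Open Scope R_scope.

Record R0_algebra := {
  carrier :> Type;
  meet : carrier -> carrier -> carrier;
  join : carrier -> carrier -> carrier;
  bot : carrier;
  top : carrier;
  neg : carrier -> carrier;
  imp : carrier -> carrier -> carrier;
  meetC : forall x y, meet x y = meet y x;
  joinC : forall x y, join x y = join y x;
  meetA : forall x y z, meet x (meet y z) = meet (meet x y) z;
  joinA : forall x y z, join x (join y z) = join (join x y) z;
  meet_absorb : forall x y, meet x (join x y) = x;
  join_absorb : forall x y, join x (meet x y) = x;
  meet_joinDr : forall x y z, meet x (join y z) = join (meet x y) (meet x z);
  join_bot : forall x, join bot x = x;
  meet_top : forall x, meet top x = x;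
  (* order-reversing involution (x <= y iff meet x y = x) *)
  negK : forall x, neg (neg x) = x;
  neg_rev : forall x y, meet x y = x -> meet (neg y) (neg x) = neg y;
  R0_1 : forall x y, imp x y = imp (neg y) (neg x);
  R0_2 : forall x, imp top x = x;
  R0_3 : forall x y z, meet (imp y z) (imp (imp x y) (imp x z)) = imp y z;
  R0_4 : forall x y z, imp x (imp y z) = imp y (imp x z);
  R0_5 : forall x y z, imp x (join y z) = join (imp x y) (imp x z);
  R0_6 : forall x y, join (imp x y) (imp (imp x y) (join (neg x) y)) = top
}.

Arguments meet {_}. Arguments join {_}. Arguments bot {_}. Arguments top {_}.
Arguments neg {_}. Arguments imp {_}.

Definition fated_filter (L : R0_algebra) (A : L -> Prop) : Prop :=
  (exists a, A a) /\ A top /\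
  forall x y a : L, A a -> A (imp a (imp (imp x y) x)) -> A x.

Definition fin {L : R0_algebra} (x : L) (t : R) (mu : L -> R) : Prop := mu x >= t.
Definition fq {L : R0_algebra} (x : L) (t : R) (mu : L -> R) : Prop := mu x + t > 1.
Definition fin_or_q {L : R0_algebra} (x : L) (t : R) (mu : L -> R) : Prop :=
  fin x t mu \/ fq x t mu.

Definition fuzzy_subset {L : R0_algebra} (mu : L -> R) : Prop :=
  forall x, 0 <= mu x <= 1.

Definition in_inq_fuzzy_fated_filter (L : R0_algebra) (mu : L -> R) : Prop :=
  fuzzy_subset mu /\
  (forall (x : L) (t : R), 0 < t <= 1 -> fin x t mu -> fin_or_q top t mu) /\
  (forall (x a y : L) (t s : R), 0 < t <= 1 -> 0 < s <= 1 ->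
     fin (imp a (imp (imp x y) x)) t mu -> fin a s mu ->
     fin_or_q x (Rmin t s) mu).

Definition level {L : R0_algebra} (mu : L -> R) (t : R) : L -> Prop :=
  fun x => mu x >= t.

Definition set_eq {L : R0_algebra} (A B : L -> Prop) : Prop :=
  forall x, A x <-> B x.

(* Rank each element by the first member of the chain containing it and put
   mu x := 1 / (2 (k + 1)) for rank k.  The level set of mu at the value of
   index i is exactly F i, every level set at a height t in (0, 1/2] is one of
   these, and mu top = 1/2 because top lies in F 0.  A fated-filter
   hypothesis a, a -> ((x -> y) -> x) in F j, for j the larger of the two
   ranks, puts x in F j, which is the fuzzy fated-filter condition for mu. *)
From Stdlib Require Import Reals Lra Lia Classical ClassicalEpsilon Wf_nat.
Open Scope R_scope.

Lemma exists_least_nat (P : nat -> Prop) :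
  (exists k, P k) -> exists k, P k /\ forall i, P i -> (k <= i)%nat.
Proof.
  intros HP.
  destruct (dec_inh_nat_subset_has_unique_least_element P (fun k => classic (P k)) HP)
    as [k [[Pk Hk] _]].
  now exists k.
Qed.

Lemma exists_greatest_le (P : nat -> Prop) (m : nat) :
  P 0%nat -> exists j, (j <= m)%nat /\ P j /\ forall i, (i <= m)%nat -> P i -> (i <= j)%nat.
Proof.
  intros P0; induction m as [|m [j [Hjm [Pj Hj]]]].
  - exists 0%nat; repeat split; auto; lia.
  - destruct (classic (P (S m))) as [PSm|nPSm].
    + exists (S m); repeat split; auto.
    + exists j; repeat split; auto.
      intros i Hi Pi; destruct (Nat.eq_dec i (S m)) as [->|]; [contradiction|].
      apply Hj; auto; lia.
Qed.

Definition weight (i : nat) : R := / (2 * INR (S i)).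

Lemma weight_pos i : 0 < weight i.
Proof.
  unfold weight; apply Rinv_0_lt_compat.
  pose proof (lt_0_INR (S i) ltac:(lia)); lra.
Qed.

Lemma weight_le_half i : weight i <= / 2.
Proof.
  unfold weight; apply Rinv_le_contravar; [lra|].
  pose proof (le_INR 1 (S i) ltac:(lia)) as H; rewrite INR_1 in H; lra.
Qed.

Lemma weight0 : weight 0 = / 2.
Proof. unfold weight; rewrite INR_1; f_equal; lra. Qed.

Lemma weight_ge_iff a b : weight a >= weight b <-> (a <= b)%nat.
Proof.
  unfold weight.
  pose proof (lt_0_INR (S a) ltac:(lia)); pose proof (lt_0_INR (S b) ltac:(lia)).
  split; intros Hab.
  - destruct (Nat.le_gt_cases a b) as [|Hba]; auto.
    pose proof (lt_INR (S b) (S a) ltac:(lia)).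
    assert (/ (2 * INR (S a)) < / (2 * INR (S b))) by (apply Rinv_lt_contravar; nra).
    lra.
  - pose proof (le_INR (S a) (S b) ltac:(lia)).
    apply Rle_ge, Rinv_le_contravar; lra.
Qed.

Section Chain.

Variables (L : R0_algebra) (n : nat) (F : nat -> L -> Prop).
Hypothesis F_step : forall i, (i < n)%nat -> forall x, F i x -> F (S i) x.
Hypothesis F_total : forall x : L, F n x.

Lemma chain_mono i j x : (i <= j)%nat -> (j <= n)%nat -> F i x -> F j x.
Proof.
  induction 1 as [|j Hij IH]; intros Hjn Fx; auto.
  apply F_step; [lia|]; apply IH; auto; lia.
Qed.

Definition rank (x : L) : nat :=
  proj1_sig (constructive_indefinite_description _
    (exists_least_nat (fun k => F k x) (ex_intro _ n (F_total x)))).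

Lemma rank_spec x : F (rank x) x /\ forall i, F i x -> (rank x <= i)%nat.
Proof. unfold rank; apply proj2_sig. Qed.

Lemma rank_le_n x : (rank x <= n)%nat.
Proof. apply rank_spec, F_total. Qed.

Lemma chain_rankE i x : (i <= n)%nat -> F i x <-> (rank x <= i)%nat.
Proof.
  intros Hi; split; [apply rank_spec|].
  intros Hr; apply chain_mono with (rank x); auto; apply rank_spec.
Qed.

Definition chain_fuzzy (x : L) : R := weight (rank x).

Lemma chain_fuzzy_subset : fuzzy_subset chain_fuzzy.
Proof.
  intros x; unfold chain_fuzzy.
  pose proof (weight_pos (rank x)); pose proof (weight_le_half (rank x)); lra.
Qed.

Lemma level_chain_fuzzy_weight i :
  (i <= n)%nat -> set_eq (level chain_fuzzy (weight i)) (F i).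
Proof.
  intros Hi x; unfold level, chain_fuzzy.
  rewrite weight_ge_iff, chain_rankE; tauto.
Qed.

Lemma level_chain_fuzzy t :
  0 < t <= / 2 -> exists i, (i <= n)%nat /\ set_eq (level chain_fuzzy t) (F i).
Proof.
  intros Ht.
  destruct (exists_greatest_le (fun i => weight i >= t) n) as [j [Hjn [Hjt Hj]]].
  { rewrite weight0; lra. }
  exists j; split; auto.
  intros x; unfold level, chain_fuzzy; rewrite chain_rankE by auto; split.
  - intros Hx; apply Hj; auto using rank_le_n.
  - intros Hr; apply Rge_trans with (weight j); auto; apply weight_ge_iff, Hr.
Qed.

Hypothesis F_fated : forall i, (i <= n)%nat -> fated_filter L (F i).

Lemma chain_fuzzy_top : chain_fuzzy top = / 2.
Proof.
  unfold chain_fuzzy; rewrite <- weight0; f_equal.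
  assert (Htop0 : F 0%nat top) by apply (F_fated 0 (Nat.le_0_l n)).
  pose proof (proj2 (rank_spec top) 0%nat Htop0); lia.
Qed.

Lemma chain_fuzzy_fated x y a :
  Rmin (chain_fuzzy (imp a (imp (imp x y) x))) (chain_fuzzy a) <= chain_fuzzy x.
Proof.
  set (b := imp a (imp (imp x y) x)).
  set (j := Nat.max (rank b) (rank a)).
  assert (Hjn : (j <= n)%nat) by (pose proof (rank_le_n a); pose proof (rank_le_n b); lia).
  assert (Fa : F j a) by (apply chain_rankE; auto; lia).
  assert (Fb : F j b) by (apply chain_rankE; auto; lia).
  assert (Hx : (rank x <= j)%nat)
    by (apply chain_rankE; auto; exact (proj2 (proj2 (F_fated j Hjn)) x y a Fa Fb)).
  apply weight_ge_iff, Rge_le in Hx; unfold chain_fuzzy.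
  destruct (Nat.le_ge_cases (rank b) (rank a)) as [Hba|Hab]; unfold j in *.
  - rewrite Nat.max_r in Hx by auto; pose proof (Rmin_r (weight (rank b)) (weight (rank a))); lra.
  - rewrite Nat.max_l in Hx by auto; pose proof (Rmin_l (weight (rank b)) (weight (rank a))); lra.
Qed.

Lemma chain_fuzzy_fated_filter : in_inq_fuzzy_fated_filter L chain_fuzzy.
Proof.
  split; [exact chain_fuzzy_subset|split].
  - intros _ t Ht _; unfold fin_or_q, fin, fq; rewrite chain_fuzzy_top.
    destruct (Rle_lt_dec t (/ 2)); [left|right]; lra.
  - intros x a y t s Ht Hs Hb Ha; left; unfold fin in *.
    pose proof (chain_fuzzy_fated x y a).
    pose proof (Rmin_glb (chain_fuzzy (imp a (imp (imp x y) x))) (chain_fuzzy a) (Rmin t s)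
      ltac:(pose proof (Rmin_l t s); lra) ltac:(pose proof (Rmin_r t s); lra)).
    lra.
Qed.

End Chain.

(* The properness hypothesis only makes the levels distinct. *)
Theorem corollary3p27 (L : R0_algebra) (n : nat) (F : nat -> L -> Prop)
  (Hfated : forall i, (i <= n)%nat -> fated_filter L (F i))
  (Hincl : forall i, (i < n)%nat -> forall x, F i x -> F (S i) x)
  (Hproper : forall i, (i < n)%nat -> exists x, F (S i) x /\ ~ F i x)
  (Htop : forall x : L, F n x) :
  exists mu : L -> R,
    in_inq_fuzzy_fated_filter L mu /\
    (forall t, 0 < t <= / 2 -> exists i, (i <= n)%nat /\ set_eq (level mu t) (F i)) /\
    (forall i, (i <= n)%nat -> exists t, 0 < t <= / 2 /\ set_eq (level mu t) (F i)) /\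
    set_eq (level mu (/ 2)) (F 0%nat).
Proof.
  exists (chain_fuzzy L n F Htop).
  split; [|split; [|split]].
  - now apply chain_fuzzy_fated_filter.
  - now apply level_chain_fuzzy.
  - intros i Hi; exists (weight i); split.
    + split; [apply weight_pos|apply weight_le_half].
    + now apply level_chain_fuzzy_weight.
  - rewrite <- weight0; apply level_chain_fuzzy_weight; [exact Hincl|lia].
Qed.
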